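(* Let $h,h'\colon Z\to X$ and $f,g\colon X\to Y$ be continuous maps such that $f\circ h'\simeq g\circ h'$. Then $\mathrm{D}(f\circ h,g\circ h)\leq \mathrm{D}(h,h')$.
   Context: For continuous maps $f,g\colon X\to Y$, the homotopic distance $\mathrm{D}(f,g)$ is the least integer $n\geq 0$ such that there is an open cover $\{U_0,\dots,U_n\}$ of $X$ with $f|_{U_j}\simeq g|_{U_j}$ for all $j$; if no such cover exists, $\mathrm{D}(f,g)=\infty$. *)

From HB Require Import structures.
From mathcomp Require Import all_boot all_order all_algebra.
From mathcomp Require Import all_classical all_reals all_analysis.
Set Implicit Arguments. Unset Strict Implicit. Unset Printing Implicit Defensive.
Import Order.TTheory GRing.Theory Num.Theory numFieldNormedType.Exports.
Local Open Scope classical_set_scope.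
Local Open Scope ring_scope.

(* [homotopic_on R U f g] : the restrictions f|_U and g|_U are homotopic,
   i.e. there is H : X * R -> Y whose restriction to U x [0,1] (with the
   subspace topology) is continuous and with H(x,0) = f x, H(x,1) = g x
   for x in U. *)
Definition homotopic_on (R : realType) (X Y : topologicalType)
    (U : set X) (f g : X -> Y) : Prop :=
  exists H : X * R -> Y,
    [/\ {within U `*` `[0%R, 1%R], continuous H},
        (forall x, U x -> H (x, 0%R) = f x) &
        (forall x, U x -> H (x, 1%R) = g x)].

Definition homotopic (R : realType) (X Y : topologicalType) (f g : X -> Y) :=
  homotopic_on R setT f g.

Definition hdist_cover (R : realType) (X Y : topologicalType)
    (f g : X -> Y) (n : nat) : Prop :=
  exists U : 'I_n.+1 -> set X,
    [/\ (forall j, open (U j)),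
        \bigcup_(j in [set: 'I_n.+1]) U j = setT &
        (forall j, homotopic_on R (U j) f g)].

(* homotopic distance: Some n = least such n, None = infinity *)
Definition hdist (R : realType) (X Y : topologicalType) (f g : X -> Y)
    : option nat :=
  match pselect (exists n, `[< hdist_cover R f g n >]) with
  | left P => Some (ex_minn P)
  | right _ => None
  end.

Definition le_ninf (a b : option nat) : Prop :=
  match a, b with
  | _, None => True
  | None, Some _ => False
  | Some m, Some n => (m <= n)%N
  end.

From HB Require Import structures.
From mathcomp Require Import all_boot all_order all_algebra.
From mathcomp Require Import all_classical all_reals all_analysis.
From mathcomp Require Import lra.
Set Implicit Arguments. Unset Strict Implicit. Unset Printing Implicit Defensive.
Import Order.TTheory GRing.Theory Num.Theory numFieldNormedType.Exports.
Local Open Scope classical_set_scope.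
Local Open Scope ring_scope.

(* Homotopy of restrictions to a fixed set U is an equivalence relation
   that is preserved by post-composition with continuous maps.  Hence on
   every U_j of a cover with h|U_j ~ h'|U_j we get
   f h ~ f h' ~ g h' ~ g h on U_j, the middle step being the restriction
   of the global homotopy f h' ~ g h'.  So every cover witnessing D(h, h')
   also witnesses D(f h, g h). *)

Lemma within_continuous_comp_subspace (T1 T2 U : topologicalType)
    (A : set T1) (B : set T2) (phi : T1 -> T2) (H : T2 -> U) :
  continuous phi -> phi @` A `<=` B -> {within B, continuous H} ->
  {within A, continuous (H \o phi)}.
Proof.
move=> cphi AB /subspace_continuousP cH.
apply/subspace_continuousP => x Ax W /(cH _ (AB _ (imageP _ Ax))) /cphi.
rewrite nbhs_simpl /=.
by apply: filterS => y /= WHy Ay; apply: WHy; apply: AB; exists y.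
Qed.

(* Unlike [withinU_continuous], the pieces S `&` C_i need only be closed in S. *)
Lemma withinIU_continuous (T U : topologicalType) (S C1 C2 : set T)
    (F : T -> U) :
  closed C1 -> closed C2 -> S `<=` C1 `|` C2 ->
  {within S `&` C1, continuous F} -> {within S `&` C2, continuous F} ->
  {within S, continuous F}.
Proof.
move=> cC1 cC2 SC /subspace_continuousP F1 /subspace_continuousP F2.
apply/subspace_continuousP => x Sx W /= FW.
suff : nbhs x (fun y => S y -> W (F y)) by [].
have near_piece (C : set T) : closed C ->
    (forall x, (S `&` C) x -> F @ within (S `&` C) (nbhs x) --> F x) ->
    nbhs x (fun y => (S `&` C) y -> W (F y)) \/ nbhs x (~` C).
  move=> cC FC; have [Cx|nCx] := pselect (C x).
    by left; exact: FC.
  by right; apply: open_nbhs_nbhs; split => //; exact: closed_openC.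
have [P1|N1] := near_piece C1 cC1 F1; have [P2|N2] := near_piece C2 cC2 F2.
- by apply: filterS (filterI P1 P2) => y [p1 p2] Sy; case: (SC y Sy) => ?;
    [exact: p1 | exact: p2].
- by apply: filterS (filterI P1 N2) => y [p1 nC2y] Sy; case: (SC y Sy) => // ?;
    exact: p1.
- by apply: filterS (filterI P2 N1) => y [p2 nC1y] Sy; case: (SC y Sy) => // ?;
    exact: p2.
- by have := nbhs_singleton N1; have := nbhs_singleton N2; case: (SC x Sx).
Qed.

Lemma closed_snd_preimage (X T : topologicalType) (A : set T) :
  closed A -> closed ((@snd X T) @^-1` A).
Proof. by move: A; apply/continuous_closedP => p; exact: cvg_snd. Qed.

Section homotopic_on.
Variables (R : realType) (X Y : topologicalType).
Implicit Types (U V : set X) (f g k : X -> Y).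

Lemma continuous_affine_snd (a b : R) :
  continuous (fun p : X * R => (p.1, a * p.2 + b)).
Proof.
move=> p.
have fst_p : (fun q : X * R => q.1) @ nbhs p --> p.1 by exact: cvg_fst.
have snd_p : (fun q : X * R => a * q.2 + b) @ nbhs p --> a * p.2 + b.
  by apply: cvgD; [apply: cvgMl_tmp; exact: cvg_snd | exact: cvg_cst].
exact: cvg_pair fst_p snd_p.
Qed.

Lemma within_continuous_affine_snd U (I : set R) (H : X * R -> Y) (a b : R) :
  (forall t, I t -> 0 <= a * t + b <= 1) ->
  {within U `*` `[0, 1], continuous H} ->
  {within U `*` I, continuous (fun p => H (p.1, a * p.2 + b))}.
Proof.
move=> abI; apply: within_continuous_comp_subspace.
  exact: continuous_affine_snd.
by move=> _ [[x t] [/= Ux It] <-]; split => //=; rewrite in_itv /=; exact: abI.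
Qed.

Lemma homotopic_onS U V f g :
  U `<=` V -> homotopic_on R V f g -> homotopic_on R U f g.
Proof.
move=> UV [H [cH H0 H1]]; exists H; split.
- by apply: continuous_subspaceW cH => -[x t] [/= /UV].
- by move=> x /UV; exact: H0.
- by move=> x /UV; exact: H1.
Qed.

Lemma homotopic_on_sym U f g : homotopic_on R U f g -> homotopic_on R U g f.
Proof.
move=> [H [cH H0 H1]]; exists (fun p => H (p.1, -1 * p.2 + 1)); split.
- apply: within_continuous_affine_snd cH => t /=.
  by rewrite in_itv /= => /andP[t0 t1]; apply/andP; split; lra.
- by move=> x Ux /=; rewrite mulr0 add0r H1.
- by move=> x Ux /=; rewrite mulr1 addNr H0.
Qed.

Lemma homotopic_on_trans U f g k :
  homotopic_on R U f g -> homotopic_on R U g k -> homotopic_on R U f k.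
Proof.
move=> [H1 [c1 H10 H11]] [H2 [c2 H20 H21]].
pose half (p : X * R) := p.2 <= 2^-1.
pose K1 p := H1 (p.1, 2 * p.2 + 0); pose K2 p := H2 (p.1, 2 * p.2 + -1).
exists (fun p => if half p then K1 p else K2 p); split.
- apply: (@withinIU_continuous _ Y _ _ _ _
    (closed_snd_preimage (@closed_le R 2^-1)) (closed_snd_preimage (@closed_ge R 2^-1))).
  + move=> p _; rewrite /preimage /=.
    by case: (leP p.2 2^-1) => h; [left | right; exact: ltW].
  + apply: (@subspace_eq_continuous _ _ _ K1).
      by move=> p /set_mem [_ /= p_half]; rewrite /from_subspace /half /= p_half.
    apply: continuous_subspaceW (within_continuous_affine_snd (I := `[0, 2^-1]) _ c1).
      move=> [x t] [[/= Ux]]; rewrite /= in_itv /= => /andP[t0 _] th.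
      by split => //=; rewrite in_itv /= t0 th.
    by move=> t /=; rewrite in_itv /= => /andP[t0 t1]; apply/andP; split; lra.
  + apply: (@subspace_eq_continuous _ _ _ K2).
      move=> [x t] /set_mem [[/= Ux _] /= t_ge]; rewrite /from_subspace /half /=.
      case: ifP => // t_le; have -> : t = 2^-1 by apply/eqP; rewrite eq_le t_le.
      by rewrite /K1 /K2 /= mulfV ?pnatr_eq0 // subrr addr0 H11 // H20.
    apply: continuous_subspaceW (within_continuous_affine_snd (I := `[2^-1, 1]) _ c2).
      move=> [x t] [[/= Ux]]; rewrite /= in_itv /= => /andP[_ t1] th.
      by split => //=; rewrite in_itv /= t1 th.
    by move=> t /=; rewrite in_itv /= => /andP[t0 t1]; apply/andP; split; lra.
- move=> x Ux; rewrite /half /= ifT; last lra.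
  by rewrite /K1 /= mulr0 addr0 H10.
- move=> x Ux; rewrite /half /= ifF; last by apply/negbTE; rewrite -ltNge; lra.
  by rewrite /K2 /= mulr1 (_ : 2 + -1 = 1 :> R) ?H21 //; lra.
Qed.

Lemma homotopic_on_comp (W : topologicalType) U f g (k : Y -> W) :
  continuous k -> homotopic_on R U f g -> homotopic_on R U (k \o f) (k \o g).
Proof.
move=> ck [H [cH H0 H1]]; exists (k \o H); split.
- by move=> p; exact: continuous_comp (cH p) (ck _).
- by move=> x Ux /=; rewrite H0.
- by move=> x Ux /=; rewrite H1.
Qed.

End homotopic_on.

Lemma le_ninf_hdist (R : realType) (X Y Y' : topologicalType)
    (f g : X -> Y) (f' g' : X -> Y') :
  (forall n, hdist_cover R f g n -> hdist_cover R f' g' n) ->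
  le_ninf (hdist R f' g') (hdist R f g).
Proof.
move=> cover_fg; rewrite /hdist.
case: pselect => [P'|nP']; case: pselect => [P|] //=.
- case: ex_minnP => m _ min'; case: ex_minnP => n /asboolP fg _.
  by apply/min'/asboolP; exact: cover_fg.
- case: P => n /asboolP fg; apply: nP'.
  by exists n; apply/asboolP; exact: cover_fg.
Qed.

Theorem proposition3p8 (R : realType) (X Y Z : topologicalType)
    (h h' : Z -> X) (f g : X -> Y) :
  continuous h -> continuous h' -> continuous f -> continuous g ->
  homotopic R (f \o h') (g \o h') ->
  le_ninf (hdist R (f \o h) (g \o h)) (hdist R h h').
Proof.
move=> _ _ cf cg fh'_gh'; apply: le_ninf_hdist => n [U [oU cover hh']].
exists U; split => // j.
apply: (@homotopic_on_trans _ _ _ _ _ (f \o h')).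
  exact: homotopic_on_comp.
apply: (@homotopic_on_trans _ _ _ _ _ (g \o h')).
  exact: homotopic_onS (subsetT _) fh'_gh'.
exact/homotopic_on_sym/homotopic_on_comp.
Qed.
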